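(* For every integer $n\ge2$ and every integer $k$ with $0\le k\le\lfloor n/2\rfloor$, \[ d^-_{n,k}=Y(n-k,k)=\binom{n-k}{k}+\binom{n-k-1}{k-1}. \]
   Context: For $n\ge1$ let $\Xi_n$ be the poset on $\{x_1,\dots,x_n\}$ whose cover relations are exactly: $x_2\prec x_1$, $x_3\prec x_2$, and for $3\le i\le n-1$, $x_i\prec x_{i+1}$ if $i$ is odd and $x_{i+1}\prec x_i$ if $i$ is even (so $x_1>x_2>x_3<x_4>x_5<\cdots$). A filter of a poset is an up-closed subset. $\Omega_n$ is the lattice of filters of $\Xi_n$ ordered by reverse inclusion. $d^-_{n,k}$ is the number of elements of $\Omega_n$ that are covered by exactly $k$ elements of $\Omega_n$ (the number of vertices of indegree $k$ in the Hasse diagram oriented from larger to smaller elements; equivalently the number of $k$-element antichains of $\Xi_n$). $Y(n,k)=\binom nk+\binom{n-1}{k-1}$ is the Lucas triangle, with binomials of negative lower index equal to $0$ except $\binom{-1}{-1}=1$. *)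

From mathcomp Require Import all_boot.
Set Implicit Arguments. Unset Strict Implicit. Unset Printing Implicit Defensive.

(* Elements x_1,...,x_n of Xi_n are encoded as i : 'I_n, with x_(i+1) <-> i. *)

(* xi_cov n i j : x_(i+1) is covered by x_(j+1) in Xi_n (x_(i+1) < x_(j+1)). *)
Definition xi_cov (n : nat) : rel 'I_n := fun i j =>
  let a := i.+1 in let b := j.+1 in
  [|| (a == 2) && (b == 1),
      (a == 3) && (b == 2),
      [&& 3 <= a, a <= n - 1, odd a & b == a.+1]
    | [&& 3 <= b, b <= n - 1, ~~ odd b & a == b.+1] ].

Definition xi_le (n : nat) : rel 'I_n := connect (@xi_cov n).

Definition is_filter (n : nat) (F : {set 'I_n}) : bool :=
  [forall x, forall y, (x \in F) && xi_le x y ==> (y \in F)].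

Definition filters (n : nat) : {set {set 'I_n}} := [set F | is_filter F].

(* Omega_n = filters ordered by reverse inclusion: F <= G in Omega_n iff G \subset F.
   omega_covers n F G : G covers F in Omega_n. *)
Definition omega_covers (n : nat) (F G : {set 'I_n}) : bool :=
  (G \proper F) &&
  [forall H in filters n, ~~ ((G \proper H) && (H \proper F))].

Definition dminus (n k : nat) : nat :=
  #|[set F in filters n | #|[set G in filters n | omega_covers F G]| == k]|.

(* Lucas triangle Y(m,k) = C(m,k) + C(m-1,k-1), with binomials of negative lower
   index equal to 0 except C(-1,-1) = 1. *)
Definition lucasY (m k : nat) : nat :=
  'C(m, k) + (match k with
              | 0 => (m == 0 : nat)
              | k'.+1 => 'C(m.-1, k')
              end).

From mathcomp Require Import all_boot zify.
Set Implicit Arguments. Unset Strict Implicit. Unset Printing Implicit Defensive.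

(* In a finite poset, the filters covering a filter F in the reverse-inclusion order are the
   sets F \ {x} with x minimal in F, and F |-> min F is a bijection from filters onto
   antichains; so d^-_{n,k} counts the k-element antichains of Xi_n.  The only chain of Xi_n
   with three elements is x_3 < x_2 < x_1, hence two distinct elements are comparable iff they
   are adjacent or are x_1 and x_3.  Coding a subset by its 0/1 word, the k-antichains become
   the words with k ones, no two of them adjacent, and not starting with 1?1.  Removing a
   final 0 or 01 gives a(n+2,k) = a(n+1,k) + a(n,k-1) for n >= 2, which is also the
   recurrence of the Lucas triangle, and the cases n = 2, 3 are checked by computation. *)


Section UpsetCovers.

Variables (T : finType) (le : rel T).
Hypotheses (le_refl : reflexive le) (le_trans : transitive le)
  (le_anti : antisymmetric le).

Definition up_closed (F : {set T}) : bool :=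
  [forall x, forall y, (x \in F) && le x y ==> (y \in F)].

Definition upsets : {set {set T}} := [set F | up_closed F].

Definition upset_covers (F G : {set T}) : bool :=
  (G \proper F) && [forall H in upsets, ~~ ((G \proper H) && (H \proper F))].

Definition minimals (S : {set T}) : {set T} :=
  [set x in S | [forall y in S, le y x ==> (y == x)]].

Definition upclosure (A : {set T}) : {set T} := [set y | [exists x in A, le x y]].

Definition antichain (A : {set T}) : bool :=
  [forall x in A, forall y in A, le x y ==> (x == y)].

Lemma up_closedP (F : {set T}) :
  reflect (forall x y, x \in F -> le x y -> y \in F) (up_closed F).
Proof.
apply: (iffP forallP) => [FP x y xF lxy | FP x].
  by have /forallP/(_ y) := FP x; rewrite xF lxy.
by apply/forallP => y; apply/implyP => /andP[]; apply: FP.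
Qed.

Lemma minimalsP (S : {set T}) x :
  reflect (x \in S /\ forall y, y \in S -> le y x -> y = x) (x \in minimals S).
Proof.
rewrite inE; apply: (iffP andP) => [[xS /forall_inP minx] | [xS minx]].
  by split=> // y yS lyx; apply/eqP; apply: (implyP (minx y yS)).
by split=> //; apply/forall_inP => y yS; apply/implyP => /(minx y yS) ->.
Qed.

Lemma antichainP (A : {set T}) :
  reflect (forall x y, x \in A -> y \in A -> le x y -> x = y) (antichain A).
Proof.
apply: (iffP forall_inP) => [AP x y xA yA lxy | AP x xA].
  by apply/eqP; apply: (implyP (forall_inP (AP x xA) y yA)).
by apply/forall_inP => y yA; apply/implyP => /(AP x y xA yA) ->.
Qed.

Lemma upclosureP (A : {set T}) y :
  reflect (exists2 x, x \in A & le x y) (y \in upclosure A).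
Proof. by rewrite inE; apply: exists_inP. Qed.

Lemma up_closed_upclosure (A : {set T}) : up_closed (upclosure A).
Proof.
apply/up_closedP => x y /upclosureP[z zA lzx] lxy.
by apply/upclosureP; exists z; last exact: le_trans lxy.
Qed.

Lemma antichain_minimals (S : {set T}) : antichain (minimals S).
Proof. by apply/antichainP => x y /minimalsP[xS _] /minimalsP[_ miny]; apply: miny. Qed.

(* Minimize the size of the down-set, which strictly decreases along [le] by antisymmetry. *)
Lemma exists_minimal (S : {set T}) y : y \in S -> exists2 x, x \in minimals S & le x y.
Proof.
move=> yS; have yP : (y \in S) && le y y by rewrite yS le_refl.
case: (@arg_minnP _ y (fun x => (x \in S) && le x y) (fun x => #|[set z | le z x]|) yP)
  => x /andP[xS lxy] xmin.
exists x => //; apply/minimalsP; split=> // z zS lzx; apply: le_anti.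
rewrite lzx /=; apply: contraT => not_lxz.
have zP : (z \in S) && le z y by rewrite zS (le_trans lzx lxy).
suff : #|[set w | le w z]| < #|[set w | le w x]| by rewrite ltnNge xmin.
apply: proper_card; apply/properP; split.
  by apply/subsetP => w; rewrite !inE => /le_trans; apply.
by exists x; rewrite !inE ?le_refl.
Qed.

Lemma upclosure_minimals (F : {set T}) : up_closed F -> upclosure (minimals F) = F.
Proof.
move=> /up_closedP Fup; apply/setP => y; apply/upclosureP/idP.
  by case=> x /minimalsP[xF _]; apply: Fup.
by case/exists_minimal=> x; exists x.
Qed.

Lemma minimals_upclosure (A : {set T}) : antichain A -> minimals (upclosure A) = A.
Proof.
move=> /antichainP Aanti; apply/setP => x; apply/minimalsP/idP.
  case=> /upclosureP[w wA lwx] xmin.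
  suff <- : w = x by [].
  by apply: xmin lwx; apply/upclosureP; exists w.
move=> xA; split; first by apply/upclosureP; exists x.
move=> z /upclosureP[w wA lwz] lzx.
have ewx : w = x by apply: Aanti (le_trans lwz lzx).
by apply: le_anti; rewrite lzx -ewx lwz.
Qed.

Lemma up_closedD1 (F : {set T}) x : up_closed F -> x \in minimals F -> up_closed (F :\ x).
Proof.
move=> /up_closedP Fup /minimalsP[_ xmin]; apply/up_closedP => y z.
rewrite !inE => /andP[yx yF] lyz; rewrite (Fup y z yF lyz) andbT.
by apply: contra yx => /eqP ezx; rewrite (xmin y yF) -?ezx.
Qed.

Lemma upset_coversE (F : {set T}) : up_closed F ->
  [set G in upsets | upset_covers F G] = [set F :\ x | x in minimals F].
Proof.
move=> Fup; apply/setP => G; rewrite !inE; apply/andP/imsetP.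
- case=> Gup /andP[GF /forall_inP Gcov].
  have [GsubF [y yF yG]] := properP GF.
  have /exists_minimal[x /minimalsP[] ] : y \in F :\: G by rewrite inE yF yG.
  rewrite inE => /andP[xG xF] xmin _.
  have xminF : x \in minimals F.
    apply/minimalsP; split=> // z zF lzx; apply: xmin (lzx).
    by rewrite inE zF andbT; apply: contra xG => zG; apply: (up_closedP _ Gup) lzx.
  exists x => //; apply/eqP; apply: contraT => GnFx.
  have GFx : G \proper F :\ x.
    rewrite properEneq GnFx; apply/subsetP => z zG.
    by rewrite !inE (subsetP GsubF z zG) andbT; apply: contraNneq xG => <-.
  by have := Gcov (F :\ x); rewrite inE up_closedD1 // GFx properD1 //; apply.
- case=> x xmin ->; split; first exact: up_closedD1.
  have [xF _] := minimalsP _ _ xmin.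
  rewrite /upset_covers properD1 //; apply/forall_inP => H _.
  apply/negP => /andP[/proper_card lt1 /proper_card lt2].
  by move: (cardsD1 x F); rewrite xF; lia.
Qed.

Lemma card_upset_covers (F : {set T}) : up_closed F ->
  #|[set G in upsets | upset_covers F G]| = #|minimals F|.
Proof.
move=> Fup; rewrite upset_coversE // card_in_imset // => x y xmin ymin eFx.
apply/eqP; apply: contraT => nxy.
have [yF _] := minimalsP _ _ ymin.
by have := setD11 y F; rewrite -eFx !inE eq_sym nxy yF.
Qed.

Lemma card_upsets_with_k_covers k :
  #|[set F in upsets | #|[set G in upsets | upset_covers F G]| == k]| =
  #|[set A | antichain A & #|A| == k]|.
Proof.
have -> : [set A | antichain A & #|A| == k] =
          minimals @: [set F in upsets | #|[set G in upsets | upset_covers F G]| == k].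
  apply/setP => A; rewrite inE; apply/andP/imsetP.
    case=> Aanti /eqP cardA; exists (upclosure A); last by rewrite minimals_upclosure.
    rewrite !inE up_closed_upclosure /= card_upset_covers ?up_closed_upclosure //.
    by rewrite minimals_upclosure // cardA.
  case=> F; rewrite !inE => /andP[Fup cardF] ->.
  by rewrite antichain_minimals -card_upset_covers.
apply/esym/card_in_imset => F G; rewrite !inE => /andP[Fup _] /andP[Gup _] eFG.
by rewrite -(upclosure_minimals Fup) -(upclosure_minimals Gup) eFG.
Qed.

End UpsetCovers.

Definition xi_height (i : nat) : nat :=
  if i is i'.+2 then odd i' else if i is 0 then 2 else 1.

Lemma xi_covE n (i j : 'I_n) :
  xi_cov i j = ((i.+1 == j) || (j.+1 == i)) && (xi_height i < xi_height j).
Proof.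
by rewrite /xi_cov /xi_height; case: i j => [[|[|[|i]]] ?] [[|[|[|j]]] ?] /=; lia.
Qed.

Lemma xi_cov_chain n (x y z : 'I_n) :
  xi_cov x y -> xi_cov y z -> (val x == 2) && (val z == 0).
Proof.
rewrite !xi_covE /xi_height.
by case: x y z => [[|[|[|x]]] ?] [[|[|[|y]]] ?] [[|[|[|z]]] ?] //=; lia.
Qed.

Lemma xi_le_cases n (x y : 'I_n) :
  xi_le x y -> [\/ x = y, xi_cov x y | (val x == 2) && (val y == 0)].
Proof.
move/connectP=> [p]; elim: p x => [|z p IHp] x /=; first by move=> _ ->; constructor 1.
case/andP=> cxz /IHp IH /IH[<- | czy | /andP[/eqP z2 _]].
- by constructor 2.
- by constructor 3; apply: xi_cov_chain czy.
- by move: cxz; rewrite xi_covE z2 ltn0 andbF.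
Qed.

Lemma xi_le_height n (x y : 'I_n) :
  xi_le x y -> x = y \/ xi_height x < xi_height y.
Proof.
case/xi_le_cases=> [-> | | /andP[/eqP-> /eqP->]]; [by left | | by right].
by rewrite xi_covE => /andP[_]; right.
Qed.

Lemma xi_le_trans n : transitive (@xi_le n).
Proof. by move=> y x z; apply: connect_trans. Qed.

Lemma xi_le_anti n : antisymmetric (@xi_le n).
Proof. by move=> x y /andP[/xi_le_height[// | ?] /xi_le_height[// | ?]]; lia. Qed.

Lemma xi_cov_succ n (x y : 'I_n) : val y = (val x).+1 -> xi_cov x y || xi_cov y x.
Proof.
rewrite !xi_covE /xi_height => ->; rewrite eqxx /=.
by case: x => [[|[|[|x]]] ?] /=; lia.
Qed.

Lemma xi_le_2_0 n (x y : 'I_n) : val x = 2 -> val y = 0 -> xi_le x y.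
Proof.
move=> x2 y0; have lt1n : 1 < n by apply: ltn_trans (ltn_ord x); rewrite x2.
have cx1 : xi_cov x (Ordinal lt1n) by rewrite xi_covE x2.
have c1y : xi_cov (Ordinal lt1n) y by rewrite xi_covE y0.
exact: connect_trans (connect1 cx1) (connect1 c1y).
Qed.

Definition bits n (A : {set 'I_n}) : seq bool := [seq x \in A | x <- enum 'I_n].

Lemma size_bits n (A : {set 'I_n}) : size (bits A) = n.
Proof. by rewrite size_map size_enum_ord. Qed.

Lemma nth_bits n (A : {set 'I_n}) (x : 'I_n) : nth false (bits A) x = (x \in A).
Proof. by rewrite (nth_map x) ?nth_ord_enum // size_enum_ord. Qed.

Definition no_adjacent_ones (s : seq bool) : bool :=
  path (fun a b => ~~ (a && b)) false s.

Lemma no_adjacent_onesP s :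
  reflect (forall i, i.+1 < size s -> ~~ (nth false s i && nth false s i.+1))
          (no_adjacent_ones s).
Proof.
apply: (iffP (pathP false)) => [adj i lti | adj [|i] lti //].
  exact: (adj i.+1).
exact: adj.
Qed.

(* Letters 0 and 2 code x_1 and x_3, the only comparable pair of non-adjacent elements. *)
Definition xi_word (s : seq bool) : bool :=
  no_adjacent_ones s && ~~ (nth false s 0 && nth false s 2).

Lemma antichain_xi_word n (A : {set 'I_n}) :
  antichain (@xi_le n) A = xi_word (bits A).
Proof.
apply/antichainP/andP => [Aanti | [/no_adjacent_onesP adjA sA] x y xA yA].
  split.
    apply/no_adjacent_onesP => i; rewrite size_bits => ltjn.
    have ltin : i < n by apply: ltnW.
    rewrite -[i]/(val (Ordinal ltin)) -[i.+1]/(val (Ordinal ltjn)) !nth_bits.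
    apply/negP => /andP[iA jA].
    have /orP[/connect1 lij | /connect1 lji] :=
      xi_cov_succ (x := Ordinal ltin) (y := Ordinal ltjn) erefl.
      by have /(congr1 val)/= := Aanti _ _ iA jA lij; lia.
    by have /(congr1 val)/= := Aanti _ _ jA iA lji; lia.
  apply/negP; have [lt2n | le_n2] := ltnP 2 n; last first.
    by case/andP=> _; rewrite nth_default ?size_bits.
  have lt0n : 0 < n by apply: ltn_trans lt2n.
  rewrite -[0]/(val (Ordinal lt0n)) -[2]/(val (Ordinal lt2n)) !nth_bits => /andP[x0A x2A].
  have x2_le_x0 := @xi_le_2_0 _ (Ordinal lt2n) (Ordinal lt0n) erefl erefl.
  by have /(congr1 val) := Aanti _ _ x2A x0A x2_le_x0.
case/xi_le_cases=> [// | | /andP[/eqP x2 /eqP y0]]; last first.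
  by move: sA; rewrite -x2 -y0 !nth_bits xA yA.
rewrite xi_covE => /andP[/orP[]/eqP adj _].
  by have := adjA x; rewrite size_bits adj ltn_ord !nth_bits xA yA => /(_ isT).
by have := adjA y; rewrite size_bits adj ltn_ord !nth_bits xA yA => /(_ isT).
Qed.

Fixpoint bitseqs (m : nat) : seq (seq bool) :=
  if m is m'.+1 then
    [seq rcons s false | s <- bitseqs m'] ++ [seq rcons s true | s <- bitseqs m']
  else [:: [::]].

Lemma mem_map_rcons (T : eqType) (S : seq (seq T)) s (b c : T) :
  (rcons s b \in [seq rcons t c | t <- S]) = (b == c) && (s \in S).
Proof.
apply/mapP/andP => [[t tS /rcons_inj[-> ->]] | [/eqP-> sS]]; last by exists s.
by rewrite eqxx.
Qed.

Lemma mem_bitseqs m s : (s \in bitseqs m) = (size s == m).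
Proof.
elim: m s => [|m IHm] s; first by case: s.
case/lastP: s => [|s b]; rewrite /= mem_cat.
  by apply/negbTE/norP; split; apply/mapP => -[[|? ?] _].
by rewrite !mem_map_rcons IHm size_rcons eqSS; case: b; rewrite /= ?orbF.
Qed.

Lemma uniq_bitseqs m : uniq (bitseqs m).
Proof.
elim: m => //= m IHm; rewrite cat_uniq !map_inj_uniq ?IHm //; try exact: rcons_injl.
rewrite andbT; apply/hasPn => _ /mapP[s _ ->]; by rewrite /= mem_map_rcons.
Qed.

Lemma card_count (T : finType) (A : pred T) : #|A| = count A (enum T).
Proof. by rewrite enumT cardE /enum_mem size_filter. Qed.

Lemma bits_inj n : injective (@bits n).
Proof. by move=> A B eAB; apply/setP => x; rewrite -!nth_bits eAB. Qed.

Lemma perm_bits_bitseqs n : perm_eq [seq bits A | A : {set 'I_n}] (bitseqs n).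
Proof.
apply: uniq_perm; first by rewrite map_inj_uniq ?enum_uniq //; apply: bits_inj.
  exact: uniq_bitseqs.
move=> s; rewrite mem_bitseqs; apply/mapP/eqP => [[A _ ->] | sn]; first exact: size_bits.
exists [set x : 'I_n | nth false s x]; first by rewrite mem_enum.
apply: (@eq_from_nth _ false) => [|i]; rewrite ?size_bits sn // => ltin.
by rewrite -[i]/(val (Ordinal ltin)) nth_bits inE.
Qed.

Lemma card_bits n (P : pred (seq bool)) :
  #|[set A : {set 'I_n} | P (bits A)]| = count P (bitseqs n).
Proof.
by rewrite cardsE card_count -(count_map (@bits n)) (permP (perm_bits_bitseqs n)).
Qed.

Lemma count_bits n (A : {set 'I_n}) : count id (bits A) = #|A|.
Proof. by rewrite count_map card_count. Qed.

Definition xi_word_count (n k : nat) : nat :=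
  count (fun s => xi_word s && (count id s == k)) (bitseqs n).

Lemma dminus_xi_word_count n k : dminus n k = xi_word_count n k.
Proof.
rewrite /dminus (card_upsets_with_k_covers (@connect0 _ _) (@xi_le_trans n) (@xi_le_anti n)).
rewrite /xi_word_count -card_bits; apply: eq_card => A.
by rewrite !inE antichain_xi_word count_bits.
Qed.

Lemma count_id_rcons s (b : bool) : count id (rcons s b) = count id s + b.
Proof. by rewrite -cats1 count_cat /= addn0. Qed.

Lemma xi_word_rcons0 s : xi_word (rcons s false) = xi_word s.
Proof. by rewrite /xi_word /no_adjacent_ones rcons_path andbF andbT !nth_rcons_default. Qed.

Lemma xi_word_rcons01 s : 1 < size s -> xi_word (rcons (rcons s false) true) = xi_word s.
Proof.
move=> s2; have nthE i : i <= size s -> nth false (rcons (rcons s false) true) i = nth false s i.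
  by move=> ltis; rewrite nth_rcons size_rcons ltnS ltis nth_rcons_default.
by rewrite /xi_word /no_adjacent_ones !rcons_path last_rcons andbF !nthE // !andbT.
Qed.

Lemma xi_word_rcons11 s : xi_word (rcons (rcons s true) true) = false.
Proof. by rewrite /xi_word /no_adjacent_ones rcons_path last_rcons /= andbF. Qed.

Lemma xi_word_count_rec n k : 2 <= n ->
  xi_word_count n.+2 k =
  xi_word_count n.+1 k + (if k is k'.+1 then xi_word_count n k' else 0).
Proof.
have bitseqsS m : bitseqs m.+1 =
    [seq rcons s false | s <- bitseqs m] ++ [seq rcons s true | s <- bitseqs m] by [].
move=> n2; rewrite /xi_word_count bitseqsS count_cat !count_map.
congr (_ + _).
  by apply: eq_count => s /=; rewrite xi_word_rcons0 count_id_rcons addn0.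
rewrite bitseqsS count_cat !count_map.
rewrite [X in _ + X](@eq_count _ _ pred0) ?count_pred0 ?addn0; last first.
  by move=> s /=; rewrite xi_word_rcons11.
case: k => [|k]; last first.
  apply: eq_in_count => s; rewrite mem_bitseqs => /eqP sn /=.
  by rewrite xi_word_rcons01 ?sn // !count_id_rcons addn0 addn1.
apply/eqP; rewrite -leqn0 leqNgt -has_count; apply/hasPn => s _ /=.
by rewrite !count_id_rcons addn0 addn1 andbF.
Qed.

Lemma lucasY_pascal m k : 0 < m -> lucasY m.+1 k.+1 = lucasY m k.+1 + lucasY m k.
Proof. by case: m => // m _; case: k => [|k]; rewrite /lucasY /= !binS ?bin0 ?bin1; lia. Qed.

Lemma lucasY_rec n k : 2 <= n ->
  lucasY (n.+2 - k) k =
  lucasY (n.+1 - k) k + (if k is k'.+1 then lucasY (n - k') k' else 0).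
Proof.
move=> n2; case: k => [|k]; first by rewrite /lucasY !bin0.
rewrite !subSS; case: (ltnP k n) => [ltkn | lenk].
  by rewrite subSn 1?ltnW // lucasY_pascal ?subn_gt0.
case: k lenk => [|[|k]] lenk; try lia.
by rewrite /lucasY /= !bin_small; lia.
Qed.

Lemma xi_word_count_lucasY n : 2 <= n -> forall k, xi_word_count n k = lucasY (n - k) k.
Proof.
suff two_steps : forall m,
    (forall k, xi_word_count m.+2 k = lucasY (m.+2 - k) k) /\
    (forall k, xi_word_count m.+3 k = lucasY (m.+3 - k) k).
  by case: n => [|[|m]] // _; apply: (two_steps m).1.
elim=> [|m [IH2 IH3]]; split=> k.
- by case: k => [|[|[|k]]].
- by case: k => [|[|[|[|k]]]].
- exact: IH3.
- by rewrite xi_word_count_rec // lucasY_rec // IH3; case: k => // k; rewrite IH2.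
Qed.

Theorem mainTheorem19 (n k : nat) :
  2 <= n -> k <= n./2 -> dminus n k = lucasY (n - k) k.
Proof. by move=> n2 _; rewrite dminus_xi_word_count xi_word_count_lucasY. Qed.
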